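(* Fix a monomial order on $S$. Let $M\subseteq F$ be the submodule generated by elements $g_1,\dots,g_t,f_1,\dots,f_s\in F$, and let $L=Sg_1+\cdots+Sg_t$. For $k=0,\dots,s$ let $L_k=L+Sf_1+\cdots+Sf_k$. Then, as $\mathbb{K}$-vector spaces, \[ M=L\oplus\bigoplus_{i=1}^s f_i\cdot N_{L_{i-1}:f_i}. \]
   Context: Standing notation. $S=\mathbb{K}[x_1,\dots,x_n]$ and $F=Se_1\oplus\cdots\oplus Se_m$ is a free $S$-module. For a submodule $L'\subseteq F$ and $f\in F$, $L':f=\{p\in S: pf\in L'\}$ is an ideal of $S$. For an ideal $I\subseteq S$ and the fixed monomial order on $S$, $N_I$ is the $\mathbb{K}$-span of the monomials of $S$ not in the initial ideal of $I$. Finally, $f\cdot N_I=\{fp:p\in N_I\}$. *)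

From HB Require Import structures.
From mathcomp Require Import all_boot all_order all_algebra.
From mathcomp Require Export mpoly.
Set Implicit Arguments. Unset Strict Implicit. Unset Printing Implicit Defensive.
Import Order.TTheory GRing.Theory.
Local Open Scope ring_scope.

Section Defs.
Variables (K : fieldType) (n : nat).
Local Notation S := {mpoly K[n]}.
Local Notation mon := 'X_{1..n}.

(* A monomial order on the monomials of S (identified with exponent vectors):
   a total order, compatible with multiplication of monomials (= addition of
   exponents), which is a well-order. *)
Definition monomial_order (le : rel mon) : Prop :=
  [/\ reflexive le, antisymmetric le, transitive le & total le]
  /\ (forall m1 m2 m : mon, le m1 m2 -> le (m1 + m)%MM (m2 + m)%MM)
  /\ well_founded (fun m1 m2 : mon => (m1 != m2) && le m1 m2).

Definition is_lead_mon (le : rel mon) (p : S) (m : mon) : Prop :=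
  m \in msupp p /\ forall m' : mon, m' \in msupp p -> le m' m.

Definition ideal_gen (G : S -> Prop) : S -> Prop :=
  fun x => exists (k : nat) (c h : 'I_k -> S),
    (forall j, G (h j)) /\ x = \sum_(j < k) c j * h j.

Definition initial_ideal (le : rel mon) (I : S -> Prop) : S -> Prop :=
  ideal_gen (fun q => exists (g : S) (m : mon),
                 [/\ I g, g != 0, is_lead_mon le g m & q = 'X_[m]]).

(* N_I: K-span of the monomials not in the initial ideal of I, i.e. the
   polynomials all of whose monomials lie outside in(I). *)
Definition N_ (le : rel mon) (I : S -> Prop) : S -> Prop :=
  fun p => forall m : mon, m \in msupp p -> ~ initial_ideal le I 'X_[m].

Variable m : nat.
(* The free module F = S e_1 + ... + S e_m, as row vectors. *)
Local Notation F := 'rV[S]_m.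

Definition colon (L' : F -> Prop) (f : F) : S -> Prop :=
  fun p => L' (p *: f).

Definition submod_gen (k : nat) (v : 'I_k -> F) : F -> Prop :=
  fun x => exists a : 'I_k -> S, x = \sum_(j < k) a j *: v j.

Definition submod_gen2 (t s : nat) (g : 'I_t -> F) (f : 'I_s -> F) : F -> Prop :=
  fun x => exists (a : 'I_t -> S) (b : 'I_s -> S),
    x = \sum_(j < t) a j *: g j + \sum_(i < s) b i *: f i.

(* L_k = L + S f_1 + ... + S f_k  (0-based: f j with j < k). *)
Definition Lk (t s : nat) (g : 'I_t -> F) (f : 'I_s -> F) (k : nat) : F -> Prop :=
  fun x => exists (l : F) (b : 'I_s -> S),
    submod_gen g l /\ x = l + \sum_(i < s | (i < k)%N) b i *: f i.

End Defs.

From HB Require Import structures.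
From mathcomp Require Import all_boot all_order all_algebra.
From mathcomp Require Import mpoly.
From Stdlib Require Import Classical.
Set Implicit Arguments. Unset Strict Implicit. Unset Printing Implicit Defensive.
Import GRing.Theory.
Local Open Scope ring_scope.

(* Every polynomial is an element of an ideal I plus a polynomial supported
   outside in(I): repeatedly cancel the largest monomial of in(I) in the
   support against an element of I led by it, which terminates because the
   order is a well-order.  The two pieces meet only in 0, since a nonzero
   element of I has its leading monomial in in(I).  For the module, write the
   coefficient of f_k as an element of L_k : f_k plus an element of
   N_{L_k : f_k}, push the first part into L + S f_1 + ... + S f_{k-1} and
   induct on k; directness follows by peeling off the top term f_k in the
   same order. *)

Lemma exists_maximal_in_seq (T : eqType) (le : rel T) (B : T -> Prop) :
  total le -> transitive le -> forall s : seq T,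
  (exists2 x, x \in s & B x) ->
  exists x, [/\ x \in s, B x & forall y, y \in s -> B y -> le y x].
Proof.
move=> le_total le_trans; elim=> [|a s IH]; first by case.
have le_aa : le a a by case/orP: (le_total a a).
have mem_cons y : y \in a :: s -> y = a \/ y \in s.
  by rewrite in_cons => /orP[/eqP|]; [left|right].
case: (classic (exists2 x, x \in s & B x)) => [/IH [x [xs Bx x_max]]|no_s].
  have [le_ax|le_xa] := orP (le_total a x).
    exists x; split; rewrite ?in_cons ?xs ?orbT //.
    by move=> y /mem_cons [->|ys By]; [|apply: x_max].
  case: (classic (B a)) => Ba.
    exists a; split; rewrite ?mem_head // => y /mem_cons [->//|ys By].
    exact: le_trans (x_max y ys By) le_xa.
  exists x; split; rewrite ?in_cons ?xs ?orbT // => y /mem_cons [->//|].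
  exact: x_max.
move=> [x /mem_cons [->|xs] Bx]; last by case: no_s; exists x.
exists a; split; rewrite ?mem_head // => y /mem_cons [->//|ys By].
by case: no_s; exists y.
Qed.

Section IdealNormalForm.
Variables (K : fieldType) (n : nat) (le : rel 'X_{1..n}).
Hypothesis le_monomial_order : monomial_order le.
Variable I : {mpoly K[n]} -> Prop.
Hypotheses (I0 : I 0) (ID : forall a b, I a -> I b -> I (a + b))
  (IM : forall c a, I a -> I (c * a)).

Local Notation in_initial m := (initial_ideal le I 'X_[m]).

Lemma initial_idealX_witness m : in_initial m ->
  exists g, [/\ I g, g@_m != 0 & forall y, y \in msupp g -> le y m].
Proof.
have [_ [le_addm _]] := le_monomial_order.
case=> k [c [h [h_lead Xm_def]]].
have [j cjhj_m] : exists j, (c j * h j)@_m != 0.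
  apply: NNPP => none; move: (congr1 (mcoeff m) Xm_def).
  rewrite mcoeffX eqxx raddf_sum big1 => [/eqP|j _]; first by rewrite oner_eq0.
  by apply/eqP/negPn/negP => ?; apply: none; exists j.
have [gj [mj [Igj _ [mj_in mj_max] hj_def]]] := h_lead j.
move: cjhj_m; rewrite hj_def -mcoeff_msupp (perm_mem (msuppMX _ _)).
case/mapP=> u u_in ->; exists (gj * 'X_[u]); split.
- by rewrite mulrC; apply: IM.
- by rewrite addmC mcoeffMX -mcoeff_msupp.
- move=> y; rewrite (perm_mem (msuppMX _ _)) => /mapP [y' /mj_max le_y' ->].
  by rewrite (addmC u y'); apply: le_addm.
Qed.

Lemma ideal_add_N_below m : forall p, m \in msupp p -> in_initial m ->
  (forall m', m' \in msupp p -> in_initial m' -> le m' m) ->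
  exists q r, [/\ I q, N_ le I r & p = q + r].
Proof.
have [[_ _ le_trans le_total] [_ le_wf]] := le_monomial_order.
elim/(well_founded_ind le_wf): m => m IH p m_p m_in m_max.
have [g [Ig gm_neq0 g_le]] := initial_idealX_witness m_in.
pose a := p@_m / g@_m.
have Iag : I (a *: g) by rewrite -mul_mpolyC; apply: IM.
have p'_lt y : y \in msupp (p - a *: g) -> in_initial y -> (y != m) && le y m.
  move=> y_in y_init; apply/andP; split.
    apply: contraTneq y_in => ->.
    by rewrite mcoeff_msupp negbK mcoeffB mcoeffZ divfK // subrr.
  have := msuppB_le y_in; rewrite mem_cat => /orP[/m_max|]; first exact.
  rewrite !mcoeff_msupp mcoeffZ => y_g; apply: g_le.
  by rewrite mcoeff_msupp; apply: contra y_g => /eqP->; rewrite mulr0.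
case: (classic (exists2 y, y \in msupp (p - a *: g) & in_initial y)).
  case/(exists_maximal_in_seq le_total le_trans) => y [y_in y_init y_max].
  have [q [r [Iq Nr p'_def]]] := IH y (p'_lt y y_in y_init) _ y_in y_init y_max.
  exists (q + a *: g), r; split=> //; first exact: ID.
  by rewrite -[p](subrK (a *: g)) p'_def addrAC.
move=> none; exists (a *: g), (p - a *: g); split=> //; last by rewrite addrC subrK.
by move=> y y_in y_init; apply: none; exists y.
Qed.

Lemma ideal_add_N p : exists q r, [/\ I q, N_ le I r & p = q + r].
Proof.
have [[_ _ le_trans le_total] _] := le_monomial_order.
case: (classic (exists2 y, y \in msupp p & in_initial y)).
  case/(exists_maximal_in_seq le_total le_trans) => y [y_in y_init y_max].
  exact: ideal_add_N_below y_in y_init y_max.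
move=> none; exists 0, p; split; rewrite ?add0r //.
by move=> y y_in y_init; apply: none; exists y.
Qed.

Lemma N_ideal_eq0 p : N_ le I p -> I p -> p = 0.
Proof.
have [[_ _ le_trans le_total] _] := le_monomial_order.
move=> Np Ip; apply: NNPP => p_neq0.
have [y [y_in _ y_max]] : exists y, [/\ y \in msupp p, True &
    forall y', y' \in msupp p -> True -> le y' y].
  apply: (exists_maximal_in_seq le_total le_trans).
  have: msupp p != [::] by rewrite msupp_eq0; apply/eqP.
  by case: (msupp p) => [//|y s _]; exists y; rewrite ?mem_head.
apply: (Np y y_in); exists 1%N, (fun _ => 1), (fun _ => 'X_[y]).
split; last by rewrite big_ord1 mul1r.
move=> _; exists p, y; split=> //; first exact/eqP.
by split=> // y' /y_max; apply.
Qed.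

Lemma N_0 : N_ le I 0.
Proof. by move=> y; rewrite mcoeff_msupp raddf0 eqxx. Qed.

End IdealNormalForm.

Lemma big_ord_lt_succ (V : nmodType) (s k : nat) (k_lt_s : (k < s)%N)
    (F : 'I_s -> V) :
  \sum_(i < s | (i < k.+1)%N) F i = F (Ordinal k_lt_s) + \sum_(i < s | (i < k)%N) F i.
Proof.
rewrite (bigD1 (Ordinal k_lt_s)) //=; congr (_ + _); apply: eq_bigl => i.
by rewrite ltnS ltn_neqAle andbC -val_eqE.
Qed.

Section SubmoduleDecomposition.
Variables (K : fieldType) (n m : nat) (le : rel 'X_{1..n}).
Hypothesis le_monomial_order : monomial_order le.
Variables (t s : nat) (g : 'I_t -> 'rV[{mpoly K[n]}]_m)
  (f : 'I_s -> 'rV[{mpoly K[n]}]_m).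

Local Notation L := (submod_gen g).
Local Notation N i := (N_ le (colon (Lk g f i) (f i))).

Lemma submod_gen0 : L 0.
Proof. by exists (fun _ => 0); rewrite big1 // => j _; rewrite scale0r. Qed.

Lemma submod_genD x y : L x -> L y -> L (x + y).
Proof.
case=> a -> [b ->]; exists (fun j => a j + b j).
by rewrite -big_split; apply: eq_bigr => j _; rewrite scalerDl.
Qed.

Lemma submod_genZ c x : L x -> L (c *: x).
Proof.
case=> a ->; exists (fun j => c * a j).
by rewrite scaler_sumr; apply: eq_bigr => j _; rewrite scalerA.
Qed.

Lemma Lk0 k : Lk g f k 0.
Proof.
exists 0, (fun _ => 0); split; first exact: submod_gen0.
by rewrite big1 ?addr0 // => j _; rewrite scale0r.
Qed.

Lemma LkD k x y : Lk g f k x -> Lk g f k y -> Lk g f k (x + y).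
Proof.
case=> l1 [b1 [L1 ->]] [l2 [b2 [L2 ->]]].
exists (l1 + l2), (fun j => b1 j + b2 j); split; first exact: submod_genD.
rewrite addrACA -big_split; congr (_ + _).
by apply: eq_bigr => j _; rewrite scalerDl.
Qed.

Lemma LkZ k c x : Lk g f k x -> Lk g f k (c *: x).
Proof.
case=> l1 [b1 [L1 ->]].
exists (c *: l1), (fun j => c * b1 j); split; first exact: submod_genZ.
rewrite scalerDr scaler_sumr; congr (_ + _).
by apply: eq_bigr => j _; rewrite scalerA.
Qed.

Lemma colon_Lk0 k v : colon (Lk g f k) v 0.
Proof. by rewrite /colon scale0r; apply: Lk0. Qed.

Lemma colon_LkD k v a b :
  colon (Lk g f k) v a -> colon (Lk g f k) v b -> colon (Lk g f k) v (a + b).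
Proof. by rewrite /colon scalerDl; apply: LkD. Qed.

Lemma colon_LkM k v c a : colon (Lk g f k) v a -> colon (Lk g f k) v (c * a).
Proof. by rewrite /colon -scalerA; apply: LkZ. Qed.

Lemma sum_prefix_N_decomp k : (k <= s)%N -> forall l (b : 'I_s -> {mpoly K[n]}), L l ->
  exists l' (p : 'I_s -> {mpoly K[n]}), [/\ L l', forall i : 'I_s, N i (p i) &
    l + \sum_(i < s | (i < k)%N) b i *: f i
      = l' + \sum_(i < s | (i < k)%N) p i *: f i].
Proof.
elim: k => [|k IH] k_le_s l b Ll.
  exists l, (fun _ => 0); split=> //; first by move=> i; apply: N_0.
  by rewrite !big_pred0.
pose fk := f (Ordinal k_le_s).
have [q [r [q_colon Nr b_def]]] := ideal_add_N le_monomial_order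
  (colon_Lk0 k fk) (@colon_LkD k fk) (@colon_LkM k fk) (b (Ordinal k_le_s)).
have [l0 [c [Ll0 qfk_def]]] := q_colon.
have [l' [p [Ll' Np E]]] := IH (ltnW k_le_s) (l + l0) (fun i => b i + c i)
  (submod_genD Ll Ll0).
exists l', (fun i => if i == Ordinal k_le_s then r else p i); split=> //.
  by move=> i; have [->|_] := eqVneq i (Ordinal k_le_s); [exact: Nr | exact: Np].
rewrite !big_ord_lt_succ eqxx b_def scalerDl qfk_def.
rewrite [in RHS](eq_bigr (fun i => p i *: f i)) => [|i]; last first.
  by have [->|//] := eqVneq i (Ordinal k_le_s); rewrite ltnn.
rewrite [RHS]addrCA -E.
rewrite [in RHS](eq_bigr (fun i => b i *: f i + c i *: f i)) => [|i _]; last first.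
  by rewrite scalerDl.
rewrite big_split /= (addrC (\sum_(i < s | (i < k)%N) b i *: f i)) !addrA.
by congr (_ + _); rewrite [LHS]addrC !addrA.
Qed.

Lemma sum_prefix_N_eq0 k : (k <= s)%N -> forall l (p : 'I_s -> {mpoly K[n]}),
  L l -> (forall i : 'I_s, N i (p i)) ->
  l + \sum_(i < s | (i < k)%N) p i *: f i = 0 ->
  l = 0 /\ forall i : 'I_s, (i < k)%N -> p i = 0.
Proof.
elim: k => [|k IH] k_le_s l p Ll Np.
  by rewrite big_pred0 // addr0.
rewrite big_ord_lt_succ addrCA => /eqP; rewrite addr_eq0 => /eqP pfk_def.
have pk_eq0 : p (Ordinal k_le_s) = 0.
  apply: (N_ideal_eq0 le_monomial_order (Np _)).
  rewrite /colon pfk_def -scaleN1r; apply: LkZ.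
  by exists l, p.
move: pfk_def; rewrite pk_eq0 scale0r => /esym/eqP; rewrite oppr_eq0 => /eqP.
case/(IH (ltnW k_le_s) l p Ll Np) => l_eq0 p_eq0; split=> // i.
rewrite ltnS leq_eqVlt => /orP[/eqP i_eq_k|/p_eq0 //].
by rewrite -pk_eq0; congr p; apply: val_inj.
Qed.

End SubmoduleDecomposition.

Theorem lemma6p2 (K : fieldType) (n m : nat) (le : rel 'X_{1..n})
  (t s : nat) (g : 'I_t -> 'rV[{mpoly K[n]}]_m) (f : 'I_s -> 'rV[{mpoly K[n]}]_m) :
  monomial_order le ->
  let M := submod_gen2 g f in
  let L := submod_gen g in
  let N (i : 'I_s) := N_ le (colon (Lk g f i) (f i)) in
  (forall x, M x <->
     exists (l : 'rV[{mpoly K[n]}]_m) (p : 'I_s -> {mpoly K[n]}),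
       [/\ L l, (forall i, N i (p i)) & x = l + \sum_(i < s) p i *: f i])
  /\
  (forall (l : 'rV[{mpoly K[n]}]_m) (p : 'I_s -> {mpoly K[n]}),
     L l -> (forall i, N i (p i)) ->
     l + \sum_(i < s) p i *: f i = 0 ->
     l = 0 /\ forall i, p i *: f i = 0).
Proof.
move=> le_monomial_order M L N.
have sum_all (p : 'I_s -> {mpoly K[n]}) :
    \sum_(i < s | (i < s)%N) p i *: f i = \sum_(i < s) p i *: f i.
  by apply: eq_bigl => i; rewrite ltn_ord.
split=> [x|l p Ll Np E]; first split.
- case=> a [b ->].
  have La : L (\sum_(j < t) a j *: g j) by exists a.
  have [l [p [Ll Np E]]] := sum_prefix_N_decomp le_monomial_order f (leqnn s) b La.
  by exists l, p; split; rewrite // -sum_all E sum_all.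
- by case=> l [p [[a ->] _ ->]]; exists a, p.
have E' : l + \sum_(i < s | (i < s)%N) p i *: f i = 0 by rewrite sum_all.
have [l_eq0 p_eq0] := sum_prefix_N_eq0 le_monomial_order (leqnn s) Ll Np E'.
by split=> // i; rewrite p_eq0 ?scale0r.
Qed.
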